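(* Let $\{g_i(s),i\in\mathbb{N}_+\}$ be a sequence of rational proper transfer functions, $f(s)$ a rational proper transfer function, and $\{L_n,n\in\mathbb{N}_+\}$ a sequence of real symmetric graph Laplacians with $L_n$ of order $n$ and $L_1=0$. Define $G_n(s)=\mathrm{diag}\{g_1(s),\dots,g_n(s)\}$, $T_n(s)=(I_n+G_n(s)f(s)L_n)^{-1}G_n(s)$ and $\bar g_n(s)=\big(\frac1n\sum_{i=1}^n g_i^{-1}(s)\big)^{-1}$. Suppose $\lambda_2(L_n)\to+\infty$ as $n\to\infty$. Let $S\subset\mathbb{C}$ be compact such that both families $\{g_i^{-1}(s),i\in\mathbb{N}_+\}$ and $\{\bar g_n(s),n\in\mathbb{N}_+\}$ are uniformly bounded on $S$, and $\inf_{s\in S}|f(s)|>0$. Then $$\lim_{n\to\infty}\sup_{s\in S}\Big\|T_n(s)-\frac1n\bar g_n(s)\mathbf{1}\mathbf{1}^\top\Big\|=0.$$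
   Context: A family of complex functions $\{h_i,i\in I\}$ is uniformly bounded on $S$ if there is $M>0$ with $|h_i(s)|\le M$ for all $i\in I$, $s\in S$. $\mathbf{1}$ is the all-ones vector of length $n$, $\|\cdot\|$ the spectral norm. A graph Laplacian is real symmetric positive semidefinite with zero row sums; $\lambda_2$ denotes the second smallest eigenvalue. *)

From HB Require Import structures.
From mathcomp Require Import all_boot all_order all_algebra.
From mathcomp Require Import all_classical all_reals all_analysis.
From mathcomp Require Import complex.
Set Implicit Arguments. Unset Strict Implicit. Unset Printing Implicit Defensive.
Import Order.TTheory GRing.Theory Num.Theory.
Import numFieldNormedType.Exports.
Local Open Scope classical_set_scope.
Local Open Scope ring_scope.

Section Defs.
Variable R : realType.
Local Notation C := R[i].

Definition ccompact (S : set C) : Prop :=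
  compact ((fun z : C => (complex.Re z, complex.Im z)) @` S : set (R * R)).

Definition cabs (z : C) : R :=
  Num.sqrt (complex.Re z ^+ 2 + complex.Im z ^+ 2).

(* A rational proper transfer function, given by a reduced (coprime)
   representation num/den with den ≠ 0 and deg num ≤ deg den. *)
Definition rat_proper (num den : {poly C}) : Prop :=
  den != 0 /\ coprimep num den /\ (size num <= size den)%N.

Definition rat_eval (num den : {poly C}) (s : C) : C := num.[s] / den.[s].

Definition vnorm n (x : 'cV[C]_n) : R :=
  Num.sqrt (\sum_(i < n) cabs (x i ord0) ^+ 2).

Definition specnorm m n (A : 'M[C]_(m, n)) : R :=
  sup [set vnorm (A *m x) | x in [set x : 'cV[C]_n | vnorm x <= 1]].

Definition laplacian n (L : 'M[R]_n) : Prop :=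
  L^T = L /\
  (forall x : 'cV[R]_n, 0 <= (x^T *m L *m x) ord0 ord0) /\
  L *m (const_mx 1 : 'cV[R]_n) = 0.

Definition sorted_spectrum n (L : 'M[R]_n) (e : seq R) : Prop :=
  sorted <=%R e /\ char_poly L = \prod_(x <- e) ('X - x%:P).

Definition lambda2 n (L : 'M[R]_n) : R :=
  nth 0 (xget [::] (sorted_spectrum L)) 1.

Definition cplx_mx m n (A : 'M[R]_(m, n)) : 'M[C]_(m, n) :=
  map_mx (fun x : R => (x%:C)%C) A.

End Defs.

(* Put d_i = g_i^{-1}(s), A = diag(d) + f(s) L_n and let m be the mean of the
   d_i, so that T_n(s) = A^{-1} and gbar_n(s) = m^{-1}.  Write u = A^{-1} x as
   y + a 1 with y orthogonal to 1.  Since L_n 1 = 0 and 1^T L_n = 0, summing the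
   entries of x = A u eliminates the Laplacian and determines a; consequently
   T_n x - (1/n) gbar_n 1 1^T x = y - b 1 with n |b| <= |m^{-1}| sup |d_i| |y|_1,
   a vector of norm O(|y|).  On the orthogonal of 1 the spectral theorem gives
   |y^* L_n y| >= lambda_2(L_n) |y|^2, so pairing x = A u with y yields
   (c lambda_2(L_n) - O(1)) |y| <= O(|x|).  The error is thus O(1/lambda_2(L_n)),
   uniformly on S, the constants coming from the uniform bounds on S. *)

From HB Require Import structures.
From mathcomp Require Import all_boot all_order all_algebra.
From mathcomp Require Import all_classical all_reals all_analysis.
From mathcomp Require Import complex.
From mathcomp Require Import ring lra.
Import Order.TTheory GRing.Theory Num.Theory.
Import numFieldNormedType.Exports.
Local Open Scope classical_set_scope.
Local Open Scope ring_scope.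
Set Implicit Arguments. Unset Strict Implicit. Unset Printing Implicit Defensive.

Section CauchySchwarz.
Variable R : rcfType.

Lemma sqr_sum_mul_le n (u v : 'I_n -> R) :
  (\sum_i u i * v i) ^+ 2 <= (\sum_i u i ^+ 2) * (\sum_i v i ^+ 2).
Proof.
set P := \sum_i _; set A := \sum_i _; set B := \sum_i _.
have E1 : \sum_i \sum_j u i ^+ 2 * v j ^+ 2 = A * B.
  by rewrite mulr_suml; apply: eq_bigr => i _; rewrite mulr_sumr.
have E2 : \sum_i \sum_j u j ^+ 2 * v i ^+ 2 = A * B by rewrite exchange_big.
have E3 : \sum_i \sum_j 2 * (u i * v i) * (u j * v j) = 2 * P ^+ 2.
  rewrite expr2 mulrA [2 * P]mulr_sumr mulr_suml; apply: eq_bigr => i _.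
  by rewrite mulr_sumr.
have lagrange : \sum_i \sum_j (u i * v j - u j * v i) ^+ 2 = 2 * (A * B - P ^+ 2).
  have expand i j : (u i * v j - u j * v i) ^+ 2
      = u i ^+ 2 * v j ^+ 2 + u j ^+ 2 * v i ^+ 2 - 2 * (u i * v i) * (u j * v j).
    by ring.
  under eq_bigr do under eq_bigr do rewrite expand.
  under eq_bigr do rewrite sumrB big_split /=.
  by rewrite sumrB big_split /= E1 E2 E3; ring.
rewrite -subr_ge0 -(pmulr_rge0 _ (ltr0n _ 2)) -lagrange.
by apply: sumr_ge0 => i _; apply: sumr_ge0 => j _; apply: sqr_ge0.
Qed.

Lemma sum_mul_le_sqrt n (u v : 'I_n -> R) :
  \sum_i u i * v i <= Num.sqrt (\sum_i u i ^+ 2) * Num.sqrt (\sum_i v i ^+ 2).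
Proof.
rewrite -sqrtrM ?sumr_ge0 // => [|i _]; last exact: sqr_ge0.
apply: le_trans (ler_norm _) _; rewrite -sqrtr_sqr.
exact/ler_wsqrtr/sqr_sum_mul_le.
Qed.

End CauchySchwarz.

Section ComplexModulus.
Variable R : realType.
Local Notation C := R[i].
Implicit Types z w : C.

Lemma cabsE z : `|z| = ((cabs z)%:C)%C.
Proof. by rewrite normc_def. Qed.

Lemma cabs_ge0 z : 0 <= cabs z.
Proof. exact: sqrtr_ge0. Qed.

Lemma cabs0 : cabs (0 : C) = 0.
Proof. by rewrite /cabs /= expr0n /= addr0 sqrtr0. Qed.

Lemma cabs_eq0 z : (cabs z == 0) = (z == 0).
Proof.
by rewrite -[z == 0]normr_eq0 cabsE -[0 : C]/((0 : R)%:C)%C (inj_eq (@complexI R)).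
Qed.

Lemma cabsM z w : cabs (z * w) = cabs z * cabs w.
Proof. by apply: (@complexI R); rewrite rmorphM /= -!cabsE normrM. Qed.

Lemma cabsV z : cabs z^-1 = (cabs z)^-1.
Proof. by apply: (@complexI R); rewrite fmorphV /= -!cabsE normfV. Qed.

Lemma cabsJ z : cabs z^* = cabs z.
Proof. by apply: (@complexI R); rewrite -!cabsE normcJ. Qed.

Lemma cabsD z w : cabs (z + w) <= cabs z + cabs w.
Proof. by rewrite -(@lecR R) rmorphD /= -!cabsE ler_normD. Qed.

Lemma cabsB z w : cabs (z - w) <= cabs z + cabs w.
Proof. by rewrite -(@lecR R) rmorphD /= -!cabsE ler_normB. Qed.

Lemma cabs_sum (I : finType) (F : I -> C) : cabs (\sum_i F i) <= \sum_i cabs (F i).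
Proof.
rewrite -(@lecR R) -cabsE rmorph_sum /=.
by under [X in _ <= X]eq_bigr do rewrite -cabsE; apply: ler_norm_sum.
Qed.

Lemma cabs_real (x : R) : cabs (x%:C)%C = `|x|.
Proof. by rewrite /cabs /= expr0n /= addr0 sqrtr_sqr. Qed.

Lemma cabs_nat k : cabs (k%:R : C) = k%:R.
Proof. by rewrite -(rmorph_nat (real_complex R)) cabs_real ger0_norm. Qed.

Lemma sqr_cabs z : ((cabs z ^+ 2)%:C)%C = z * z^*.
Proof. by rewrite rmorphXn /= -cabsE normCK. Qed.

End ComplexModulus.

Section ComplexVectors.
Variables (R : realType) (n : nat).
Local Notation C := R[i].
Local Notation ones := (const_mx 1 : 'cV[C]_n).
Implicit Types x y u v : 'cV[C]_n.

Definition cvdot u v : C := \sum_i (u i ord0)^* * v i ord0.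

Lemma cvdotE u v : cvdot u v = (map_mx Num.conj u^T *m v) ord0 ord0.
Proof. by rewrite !mxE; apply: eq_bigr => i _; rewrite !mxE. Qed.

Lemma sqr_vnorm x : vnorm x ^+ 2 = \sum_i cabs (x i ord0) ^+ 2.
Proof. by rewrite sqr_sqrtr // sumr_ge0 // => i _; apply: sqr_ge0. Qed.

Lemma vnorm_ge0 x : 0 <= vnorm x.
Proof. exact: sqrtr_ge0. Qed.

Lemma cvdotii x : cvdot x x = ((vnorm x ^+ 2)%:C)%C.
Proof.
rewrite sqr_vnorm rmorph_sum /=; apply: eq_bigr => i _.
by rewrite sqr_cabs mulrC.
Qed.

Lemma vnorm_eq0 x : vnorm x = 0 -> x = 0.
Proof.
move=> /(congr1 (fun r => r ^+ 2)); rewrite sqr_vnorm expr0n /= => /eqP.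
rewrite psumr_eq0 => [/allP x0|i _]; last exact: sqr_ge0.
apply/matrixP => i j; rewrite ord1 mxE.
by have /implyP/(_ isT) := x0 i (mem_index_enum _); rewrite sqrf_eq0 cabs_eq0 => /eqP.
Qed.

Lemma cabs_cvdot_le u v : cabs (cvdot u v) <= vnorm u * vnorm v.
Proof.
apply: le_trans (cabs_sum _) _; under eq_bigr do rewrite cabsM cabsJ.
exact: sum_mul_le_sqrt.
Qed.

Lemma sum_cabs_le x : \sum_i cabs (x i ord0) <= Num.sqrt n%:R * vnorm x.
Proof.
have := sum_mul_le_sqrt (fun=> 1) (fun i => cabs (x i ord0)).
by rewrite expr1n sumr_const card_ord; under eq_bigr do rewrite mul1r.
Qed.

Lemma cabs_sum_mul_le (a b : 'I_n -> C) (M : R) : (forall i, cabs (a i) <= M) ->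
  cabs (\sum_i a i * b i) <= M * \sum_i cabs (b i).
Proof.
move=> aM; apply: le_trans (cabs_sum _) _; rewrite mulr_sumr.
by apply: ler_sum => i _; rewrite cabsM ler_wpM2r ?cabs_ge0.
Qed.

Lemma cabs_cvdot_diag_le (a : 'I_n -> C) (M : R) y : (forall i, cabs (a i) <= M) ->
  cabs (cvdot y (diag_mx (\row_i a i) *m y)) <= M * vnorm y ^+ 2.
Proof.
move=> aM; rewrite sqr_vnorm /cvdot; under eq_bigr do rewrite mul_diag_mx !mxE mulrCA.
apply: le_trans (cabs_sum_mul_le _ aM) _.
by under eq_bigr do rewrite cabsM cabsJ -expr2.
Qed.

Lemma cabs_cvdot_diag_ones_le (a : 'I_n -> C) (M : R) y : (forall i, cabs (a i) <= M) ->
  cabs (cvdot y (diag_mx (\row_i a i) *m ones)) <= M * \sum_i cabs (y i ord0).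
Proof.
move=> aM; rewrite /cvdot; under eq_bigr do rewrite mul_diag_mx !mxE mulr1 mulrC.
by apply: le_trans (cabs_sum_mul_le _ aM) _; under eq_bigr do rewrite cabsJ.
Qed.

Lemma vnorm0 : vnorm (0 : 'cV[C]_n) = 0.
Proof. by rewrite /vnorm big1 ?sqrtr0 // => i _; rewrite mxE cabs0 expr0n. Qed.

Lemma const1_mul x : (const_mx 1 : 'M[C]_n) *m x = (\sum_i x i ord0) *: ones.
Proof.
apply/matrixP => i j; rewrite ord1 !mxE mulr1.
by apply: eq_bigr => k _; rewrite mxE mul1r.
Qed.

Lemma cvdotDr u v w : cvdot u (v + w) = cvdot u v + cvdot u w.
Proof. by rewrite /cvdot -big_split; apply: eq_bigr => i _; rewrite mxE mulrDr. Qed.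

Lemma cvdotBr u v w : cvdot u (v - w) = cvdot u v - cvdot u w.
Proof. by rewrite /cvdot -sumrB; apply: eq_bigr => i _; rewrite !mxE mulrBr. Qed.

Lemma cvdotZr u (a : C) v : cvdot u (a *: v) = a * cvdot u v.
Proof. by rewrite /cvdot mulr_sumr; apply: eq_bigr => i _; rewrite mxE mulrCA. Qed.

Lemma sum_cabs_mul_le x y :
  (\sum_i cabs (x i ord0)) * (\sum_i cabs (y i ord0)) <= n%:R * vnorm x * vnorm y.
Proof.
have sum_ge0 (z : 'cV[C]_n) : 0 <= \sum_i cabs (z i ord0) by apply: sumr_ge0 => i _; apply: cabs_ge0.
apply: le_trans (ler_pM (sum_ge0 x) (sum_ge0 y) (sum_cabs_le x) (sum_cabs_le y)) _.
by rewrite mulrACA -expr2 sqr_sqrtr ?ler0n // mulrA.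
Qed.

Lemma sum_center x : \sum_i (x - (n%:R^-1 * \sum_j x j ord0) *: ones) i ord0 = 0.
Proof.
case: n x => [|m] x; first by rewrite big_ord0.
under eq_bigr do rewrite !mxE mulr1.
by rewrite sumrB sumr_const card_ord -mulrnAl -mulr_natr mulVf ?mul1r ?subrr ?pnatr_eq0.
Qed.

Lemma sqr_vnorm_shift y (b : C) : \sum_i y i ord0 = 0 ->
  vnorm (y - b *: ones) ^+ 2 = vnorm y ^+ 2 + n%:R * cabs b ^+ 2.
Proof.
move=> y0; apply: (@complexI R); rewrite !sqr_vnorm rmorphD rmorphM !rmorph_sum /=.
rewrite rmorph_nat sqr_cabs; under eq_bigr do rewrite sqr_cabs !mxE mulr1 rmorphB /=.
under [in RHS]eq_bigr do rewrite sqr_cabs.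
have y0J : \sum_i (y i ord0)^* = 0 by rewrite -rmorph_sum y0 rmorph0.
under eq_bigr do rewrite mulrBl !mulrBr.
rewrite !sumrB -!mulr_suml -mulr_sumr y0J y0 sumr_const card_ord.
by rewrite -mulr_natl; ring.
Qed.

End ComplexVectors.

Section ResidualEstimate.
Variables (R : realType) (n : nat).
Local Notation C := R[i].
Local Notation ones := (const_mx 1 : 'cV[C]_n).
(* [d i], [K] and [m^-1] stand for g_i^{-1}(s), f(s) L_n and gbar_n(s). *)
Variables (d : 'I_n -> C) (K : 'M[C]_n) (kappa M1 M2 : R).
Hypothesis K_ones : K *m ones = 0.
Hypothesis ones_K : (const_mx 1 : 'rV[C]_n) *m K = 0.
Hypothesis K_coercive : forall y : 'cV[C]_n, \sum_i y i ord0 = 0 ->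
  kappa * vnorm y ^+ 2 <= cabs (cvdot y (K *m y)).
Hypothesis d_le : forall i, cabs (d i) <= M1.
Let m := n%:R^-1 * \sum_i d i.
Hypothesis m_neq0 : m != 0.
Hypothesis invm_le : cabs m^-1 <= M2.

Implicit Types u : 'cV[C]_n.

Let D := diag_mx (\row_i d i).
Let A := D + K.
Let center (u : 'cV[C]_n) := u - (n%:R^-1 * \sum_i u i ord0) *: ones.

Lemma sum_K_mulmx (x : 'cV[C]_n) : \sum_i (K *m x) i ord0 = 0.
Proof.
transitivity (((const_mx 1 : 'rV[C]_n) *m K *m x) ord0 ord0).
  by rewrite -mulmxA mxE; apply: eq_bigr => i _; rewrite !mxE mul1r.
by rewrite ones_K mul0mx mxE.
Qed.

Lemma nat_neq0 : (n%:R : C) != 0.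
Proof. by apply: contraNneq m_neq0 => n0; rewrite /m n0 invr0 mul0r. Qed.

Lemma nat_gt0 : (0 : R) < n%:R.
Proof. by rewrite ltr0n lt0n -(pnatr_eq0 C) nat_neq0. Qed.

Lemma M1_ge0 : 0 <= M1.
Proof.
have n_gt0 : (0 < n)%N by rewrite -(ltr0n R) nat_gt0.
exact: le_trans (cabs_ge0 _) (d_le (Ordinal n_gt0)).
Qed.

Lemma M2_ge0 : 0 <= M2.
Proof. exact: le_trans (cabs_ge0 _) invm_le. Qed.

Lemma sum_A_mulmx u : \sum_i (A *m u) i ord0 =
  \sum_i d i * center u i ord0 + n%:R^-1 * (\sum_i u i ord0) * (n%:R * m).
Proof.
rewrite mulmxDl; under eq_bigr do rewrite mxE.
rewrite big_split /= sum_K_mulmx addr0.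
under eq_bigr do rewrite mul_diag_mx !mxE.
under [X in _ = X + _]eq_bigr do rewrite !mxE mulr1 mulrBr.
by rewrite sumrB -mulr_suml /m; field; exact: nat_neq0.
Qed.

Lemma residualE u :
  u - (n%:R^-1 * m^-1 * \sum_i (A *m u) i ord0) *: ones
  = center u - (n%:R^-1 * m^-1 * \sum_i d i * center u i ord0) *: ones.
Proof.
rewrite sum_A_mulmx /center.
set a := _ * \sum_i u i ord0; set S := \sum_i _.
have -> : n%:R^-1 * m^-1 * (S + a * (n%:R * m)) = a + n%:R^-1 * m^-1 * S.
  by field; rewrite nat_neq0 m_neq0.
by rewrite scalerDl opprD addrA.
Qed.

Lemma vnorm_residual_le u :
  vnorm (u - (n%:R^-1 * m^-1 * \sum_i (A *m u) i ord0) *: ones)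
  <= (1 + M1 * M2) * vnorm (center u).
Proof.
rewrite residualE; set y := center u; set S := \sum_i _.
set s := \sum_i cabs (y i ord0); set b := _ * S.
have s_ge0 : 0 <= s by apply: sumr_ge0 => i _; apply: cabs_ge0.
have b_le : n%:R * cabs b <= M1 * M2 * s.
  rewrite !cabsM cabsV cabs_nat !mulrA mulfV ?gt_eqF ?nat_gt0 // mul1r.
  rewrite [M1 * M2]mulrC -mulrA ler_pM ?cabs_ge0 //; exact: cabs_sum_mul_le.
have s_le : s ^+ 2 <= n%:R * vnorm y ^+ 2.
  by rewrite !expr2 mulrA; apply: sum_cabs_mul_le.
have nb_le : n%:R * cabs b ^+ 2 <= (M1 * M2) ^+ 2 * vnorm y ^+ 2.
  rewrite -(ler_pM2l nat_gt0) mulrA -expr2 -exprMn mulrCA.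
  apply: (@le_trans _ _ ((M1 * M2 * s) ^+ 2)).
    by apply: lerXn2r; rewrite ?nnegrE ?mulr_ge0 ?ler0n ?cabs_ge0 ?M1_ge0 ?M2_ge0.
  by rewrite exprMn ler_wpM2l ?exprn_ge0 ?mulr_ge0 ?M1_ge0 ?M2_ge0.
rewrite -ler_sqr ?nnegrE ?mulr_ge0 ?addr_ge0 ?mulr_ge0 ?M1_ge0 ?M2_ge0 ?vnorm_ge0 //.
rewrite sqr_vnorm_shift ?sum_center //.
have := mulr_ge0 (mulr_ge0 M1_ge0 M2_ge0) (sqr_ge0 (vnorm y)).
rewrite exprMn; nra.
Qed.

Lemma mulmx_A_center u : A *m u =
  D *m center u + (n%:R^-1 * \sum_i u i ord0) *: (D *m ones) + K *m center u.
Proof.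
by rewrite /center !mulmxBr -!scalemxAr K_ones scaler0 subr0 subrK mulmxDl.
Qed.

Lemma cabs_mean_le u :
  n%:R * cabs (n%:R^-1 * \sum_i u i ord0)
  <= M2 * (\sum_i cabs ((A *m u) i ord0) + M1 * \sum_i cabs (center u i ord0)).
Proof.
set a : C := n%:R^-1 * \sum_i u i ord0.
have -> : a = n%:R^-1 * (m^-1 * (\sum_i (A *m u) i ord0 - \sum_i d i * center u i ord0)).
  by rewrite sum_A_mulmx -/a; field; rewrite nat_neq0 m_neq0.
rewrite cabsM cabsV cabs_nat mulVKf ?gt_eqF ?nat_gt0 // cabsM ler_pM ?cabs_ge0 //.
apply: le_trans (cabsB _ _) (lerD (cabs_sum _) _); exact: cabs_sum_mul_le.
Qed.

Lemma coercive_center_le u :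
  kappa * vnorm (center u) ^+ 2 <= (1 + M1 * M2) * vnorm (center u) * vnorm (A *m u)
                                 + (M1 + M1 ^+ 2 * M2) * vnorm (center u) ^+ 2.
Proof.
have := K_coercive (sum_center u : \sum_i center u i ord0 = 0).
have := cabs_mean_le u.
have -> : K *m center u = A *m u
    - (D *m center u + (n%:R^-1 * \sum_i u i ord0) *: (D *m ones)).
  by rewrite mulmx_A_center [_ + K *m _]addrC addrK.
set y := center u; set w := A *m u; clearbody y w.
set a : C := _ * _ => a_le.
rewrite cvdotBr cvdotDr cvdotZr.
set s := \sum_i cabs (y i ord0); set sw := \sum_i cabs (w i ord0).
have s_ge0 : 0 <= s by apply: sumr_ge0 => i _; apply: cabs_ge0.
have aD1_le : n%:R * (cabs a * (M1 * s))
    <= n%:R * (M1 * M2 * (vnorm y * vnorm w + M1 * vnorm y ^+ 2)).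
  rewrite mulrA; apply: le_trans (ler_wpM2r (mulr_ge0 M1_ge0 s_ge0) a_le) _.
  have M12_ge0 := mulr_ge0 M1_ge0 M2_ge0.
  have := ler_wpM2l M12_ge0 (sum_cabs_mul_le w y).
  have := ler_wpM2l (mulr_ge0 M1_ge0 M12_ge0) (sum_cabs_mul_le y y).
  rewrite -/s -/sw expr2; nra.
rewrite ler_pM2l ?nat_gt0 // in aD1_le => Ky_ge.
apply: le_trans Ky_ge _; apply: le_trans (cabsB _ _) _.
apply: le_trans (lerD (lexx _) (cabsD _ _)) _; rewrite cabsM.
have := cabs_cvdot_le y w; have := cabs_cvdot_diag_le y d_le.
have := ler_wpM2l (cabs_ge0 a) (cabs_cvdot_diag_ones_le y d_le).
rewrite -/D -/s; nra.
Qed.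

Lemma vnorm_center_le u :
  (kappa - (M1 + M1 ^+ 2 * M2)) * vnorm (center u) <= (1 + M1 * M2) * vnorm (A *m u).
Proof.
have := coercive_center_le u; have := vnorm_ge0 (center u).
rewrite le0r => /predU1P[->|y_gt0] h.
  by rewrite mulr0 mulr_ge0 ?addr_ge0 ?mulr_ge0 ?M1_ge0 ?M2_ge0 ?vnorm_ge0.
by rewrite -(ler_pM2r y_gt0); nra.
Qed.

Lemma residual_le u :
  (kappa - (M1 + M1 ^+ 2 * M2))
    * vnorm (u - (n%:R^-1 * m^-1 * \sum_i (A *m u) i ord0) *: ones)
  <= (1 + M1 * M2) ^+ 2 * vnorm (A *m u).
Proof.
have B_ge0 : 0 <= 1 + M1 * M2 by rewrite addr_ge0 ?mulr_ge0 ?M1_ge0 ?M2_ge0.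
have [k_le0|k_gt0] := lerP (kappa - (M1 + M1 ^+ 2 * M2)) 0.
  apply: le_trans (mulr_le0_ge0 k_le0 (vnorm_ge0 _)) _.
  by rewrite mulr_ge0 ?exprn_ge0 ?vnorm_ge0.
apply: le_trans (ler_wpM2l (ltW k_gt0) (vnorm_residual_le u)) _.
rewrite mulrCA [(1 + _) ^+ 2]expr2 -mulrA; apply: ler_wpM2l => //.
exact: vnorm_center_le.
Qed.

Hypothesis kappa_gt : M1 + M1 ^+ 2 * M2 < kappa.

Lemma diag_add_unitmx : A \in unitmx.
Proof.
apply: contraT; rewrite unitmxE unitfE negbK -det_tr => /det0P[v v_neq0 vA].
have Av : A *m v^T = 0 by rewrite -[A]trmxK -trmx_mul vA trmx0.
have := residual_le v^T; rewrite Av vnorm0 mulr0 big1 => [|i _]; last by rewrite mxE.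
rewrite mulr0 scale0r subr0 pmulr_rle0 ?subr_gt0 // => v_le0.
have /vnorm_eq0/(congr1 trmx) : vnorm v^T = 0 by apply/eqP; rewrite eq_le v_le0 vnorm_ge0.
by rewrite trmxK trmx0 => v0; rewrite v0 eqxx in v_neq0.
Qed.

Lemma invmx_residual_le x :
  (kappa - (M1 + M1 ^+ 2 * M2))
    * vnorm ((invmx A - (n%:R^-1 * m^-1) *: const_mx 1) *m x)
  <= (1 + M1 * M2) ^+ 2 * vnorm x.
Proof.
have := residual_le (invmx A *m x); rewrite mulKVmx ?diag_add_unitmx //.
by rewrite mulmxBl -scalemxAl const1_mul scalerA.
Qed.

End ResidualEstimate.

Lemma char_poly_similar (F : fieldType) n (P A : 'M[F]_n) : P \in unitmx ->
  char_poly (invmx P *m A *m P) = char_poly A.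
Proof.
move=> P_unit; set iPc := map_mx polyC (invmx P); set Pc := map_mx polyC P.
have iPcPc : iPc *m Pc = 1%:M by rewrite -map_mxM mulVmx // map_mx1.
have det_iPcPc : \det iPc * \det Pc = 1 by rewrite -det_mulmx iPcPc det1.
rewrite /char_poly; have -> : char_poly_mx (invmx P *m A *m P) = iPc *m char_poly_mx A *m Pc.
  have iPcXPc : iPc *m 'X%:M *m Pc = 'X%:M by rewrite scalar_mxC -mulmxA iPcPc mulmx1.
  by rewrite /char_poly_mx mulmxBr mulmxBl iPcXPc !map_mxM.
by rewrite !det_mulmx mulrAC det_iPcPc mul1r.
Qed.

Lemma sorted_count_lt_nth1 d (T : orderType d) (x0 : T) (e : seq T) :
  sorted <=%O e -> (count (fun x => (x < nth x0 e 1)%O) e <= 1)%N.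
Proof.
case: e => [|e0 [|e1 e']] //=; first by rewrite addn0 leq_b1.
move=> /andP[_ e1e'].
have /allP e1_le := order_path_min (@le_trans _ T) e1e'.
rewrite ltxx add0n (@eq_in_count _ _ pred0) ?count_pred0 ?addn0 ?leq_b1 //.
by move=> x /e1_le /= e1x; rewrite ltNge e1x.
Qed.

Section RealSymmetricSpectrum.
Variables (R : realType) (n : nat).
Local Notation C := R[i].
Local Open Scope sesquilinear_scope.

Lemma cplx_mx_spectral (L : 'M[R]_n) (e : seq R) :
  L^T = L -> char_poly L = \prod_(x <- e) ('X - x%:P) ->
  exists P : 'M[C]_n, exists r : 'I_n -> R,
  [/\ P \is unitarymx, cplx_mx L = P ^t* *m diag_mx (\row_k (r k)%:C)%C *m P
    & perm_eq [seq r k | k <- enum 'I_n] e].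
Proof.
move=> L_sym L_char; set Lc := cplx_mx L.
have Lc_normal : Lc \is normalmx.
  have Lc_herm : Lc ^t* = Lc.
    apply/matrixP => i j; rewrite !mxE conj_Creal ?complex_real //.
    by rewrite -[in L j i]L_sym mxE.
  by apply/normalmxP; rewrite Lc_herm.
have /orthomx_spectralP Lc_eq := Lc_normal.
set P := spectralmx Lc in Lc_eq; set sp := spectral_diag Lc in Lc_eq.
have P_unitary : P \is unitarymx := spectral_unitarymx Lc.
rewrite invmx_unitary // in Lc_eq.
have sp_perm : perm_eq [seq sp 0 k | k <- enum 'I_n] (map (real_complex R) e).
  apply: prod_XsubC_eq; rewrite [RHS]big_map -map_prod_XsubC -L_char map_char_poly.
  rewrite (_ : map_mx _ L = Lc) // Lc_eq -(invmx_unitary P_unitary).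
  rewrite char_poly_similar ?unitarymx_unit //.
  rewrite char_poly_trig ?diag_mx_is_trig // big_map big_enum /=.
  by apply: eq_bigr => k _; rewrite mxE eqxx mulr1n.
exists P, (fun k => complex.Re (sp 0 k)); split => //.
  rewrite {1}Lc_eq; congr (_ *m diag_mx _ *m _); apply/rowP => k; rewrite mxE.
  have : sp 0 k \in map (real_complex R) e by rewrite -(perm_mem sp_perm) map_f ?mem_enum.
  by case/mapP => x _ ->.
by have := perm_map (@complex.Re R) sp_perm; rewrite -!map_comp map_id_in.
Qed.

End RealSymmetricSpectrum.

Section SpectralCoercivity.
Variables (R : realType) (n : nat).
Local Notation C := R[i].
Local Notation ones := (const_mx 1 : 'cV[C]_n).
Local Open Scope sesquilinear_scope.

Lemma cvdot_adjoint m (P : 'M[C]_(m, n)) (u : 'cV[C]_n) (v : 'cV[C]_m) :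
  cvdot u (P ^t* *m v) = cvdot (P *m u) v.
Proof. by rewrite !cvdotE mulmxA trmx_mul map_mxM. Qed.

Variables (P : 'M[C]_n) (r : 'I_n -> R) (lam : R).
Hypothesis P_unitary : P \is unitarymx.
Hypothesis lam_gt0 : 0 < lam.
Hypothesis few_low : (#|[pred k | (r k < lam)%R]| <= 1)%N.
Let Dr := diag_mx (\row_k (r k)%:C)%C.
Hypothesis K_ones : P ^t* *m Dr *m P *m ones = 0.

Implicit Types u v y : 'cV[C]_n.

Lemma unitary_mulVmx : P ^t* *m P = 1%:M.
Proof. by rewrite -invmx_unitary // mulVmx ?unitarymx_unit. Qed.

Lemma cvdot_unitary u v : cvdot (P *m u) (P *m v) = cvdot u v.
Proof. by rewrite -cvdot_adjoint mulmxA unitary_mulVmx mul1mx. Qed.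

(* All eigenvalues but [r k] are [>= lam > 0], so [P *m ones], which [Dr]
   annihilates, is supported on the mode [k]; as [y] is orthogonal to [ones],
   [P *m y] vanishes there. *)
Lemma low_mode_vanish y k : \sum_i y i ord0 = 0 -> r k < lam -> (P *m y) k ord0 = 0.
Proof.
move=> y0 rk_lt; set z1 := P *m ones.
have Dz1 j : (r j)%:C%C * z1 j ord0 = 0.
  have : Dr *m z1 = 0.
    have := congr1 (mulmx P) K_ones.
    by rewrite mulmx0 !mulmxA (unitarymxP P_unitary) mul1mx -mulmxA.
  by move/matrixP/(_ j ord0); rewrite mul_diag_mx !mxE.
have z1_out j : j != k -> z1 j ord0 = 0.
  move=> jk; have : r j != 0.
    apply: contra jk => /eqP rj0.
    by apply/eqP/(card_le1_eqP few_low); rewrite inE /= ?rj0.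
  move=> rj_neq0; move: (Dz1 j) => /eqP; rewrite mulf_eq0 => /orP[|/eqP //].
  by rewrite -(rmorph0 (real_complex R)) (inj_eq (@complexI R)) (negPf rj_neq0).
have z1k : z1 k ord0 != 0.
  apply: contra_neq (oner_neq0 C) => z1k0.
  have z10 : z1 = 0.
    by apply/matrixP => i j; rewrite ord1 [RHS]mxE; case: (eqVneq i k) => [->|/z1_out].
  have := congr1 (mulmx (P ^t*)) z10.
  by rewrite mulmxA unitary_mulVmx mul1mx mulmx0 => /matrixP/(_ k ord0); rewrite !mxE.
have : cvdot (P *m y) z1 = 0.
  rewrite cvdot_unitary /cvdot; under eq_bigr do rewrite mxE mulr1.
  by rewrite -rmorph_sum y0 rmorph0.
rewrite /cvdot (bigD1 k) //= big1 ?addr0 => [/eqP|j jk]; last by rewrite z1_out ?mulr0.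
by rewrite mulf_eq0 (negPf z1k) orbF conjC_eq0 => /eqP.
Qed.

Lemma vnorm_unitary u : vnorm (P *m u) = vnorm u.
Proof.
have := cvdot_unitary u u; rewrite !cvdotii => /complexI/eqP.
by rewrite eqrXn2 ?vnorm_ge0 // => /eqP.
Qed.

Lemma spectral_coercive y : \sum_i y i ord0 = 0 ->
  lam * vnorm y ^+ 2 <= cabs (cvdot y (P ^t* *m Dr *m P *m y)).
Proof.
move=> y0; set z := P *m y.
have -> : cvdot y (P ^t* *m Dr *m P *m y) = ((\sum_k r k * cabs (z k ord0) ^+ 2)%:C)%C.
  rewrite -!mulmxA cvdot_adjoint -/z /cvdot rmorph_sum /=; apply: eq_bigr => k _.
  by rewrite mul_diag_mx !mxE rmorphM /= sqr_cabs; ring.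
rewrite cabs_real -(vnorm_unitary y) -/z sqr_vnorm mulr_sumr.
apply: le_trans (ler_norm _); apply: ler_sum => k _.
have [/(low_mode_vanish y0) ->|lam_le] := ltP (r k) lam.
  by rewrite cabs0 expr0n /= !mulr0.
by rewrite ler_wpM2r ?exprn_ge0 ?cabs_ge0.
Qed.

End SpectralCoercivity.

Section LaplacianCoercivity.
Variables (R : realType) (n : nat).
Local Notation C := R[i].
Local Notation ones := (const_mx 1 : 'cV[C]_n).
Implicit Types L : 'M[R]_n.

Lemma cplx_mx_ones L : L *m (const_mx 1 : 'cV_n) = 0 -> cplx_mx L *m ones = 0.
Proof.
move=> L_ones; have -> : ones = map_mx (real_complex R) (const_mx 1).
  by apply/matrixP => i j; rewrite !mxE.
by rewrite -map_mxM L_ones map_mx0.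
Qed.

Lemma ones_cplx_mx L : L^T = L -> L *m (const_mx 1 : 'cV_n) = 0 ->
  (const_mx 1 : 'rV[C]_n) *m cplx_mx L = 0.
Proof.
move=> L_sym L_ones; apply: trmx_inj.
by rewrite trmx_mul trmx_const /cplx_mx map_trmx L_sym trmx0 cplx_mx_ones.
Qed.

(* Without a sorted spectrum [lambda2] is the junk value [nth 0 [::] 1 = 0]. *)
Lemma lambda2_spectrum L : 0 < lambda2 L ->
  exists2 e, sorted_spectrum L e & lambda2 L = nth 0 e 1.
Proof.
rewrite /lambda2; case: xgetP => [e _ Le|_]; first by exists e.
by rewrite /= ltxx.
Qed.

Lemma laplacian_coercive L : laplacian L -> 0 < lambda2 L ->
  forall y : 'cV[C]_n, \sum_i y i ord0 = 0 ->
  lambda2 L * vnorm y ^+ 2 <= cabs (cvdot y (cplx_mx L *m y)).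
Proof.
move=> [L_sym [_ L_ones]] lam_gt0 y y0.
have [e [e_sorted L_char] lamE] := lambda2_spectrum lam_gt0.
have [P [r [P_unitary LcE r_perm]]] := cplx_mx_spectral L_sym L_char.
have few_low : (#|[pred k | (r k < lambda2 L)%R]| <= 1)%N.
  rewrite cardE /enum_mem size_filter -enumT -(count_map r (fun x => x < lambda2 L)%R).
  by rewrite (permP r_perm) lamE sorted_count_lt_nth1.
rewrite LcE; apply: spectral_coercive => //.
by rewrite -LcE cplx_mx_ones.
Qed.

End LaplacianCoercivity.

Lemma specnorm_le (R : realType) m n (A : 'M[R[i]]_(m, n)) (e : R) :
  (forall x, vnorm x <= 1 -> vnorm (A *m x) <= e) -> specnorm A <= e.
Proof.
move=> A_le; apply: ge_sup => [|_ [x x_le1 <-]]; last exact: A_le.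
by exists (vnorm (A *m 0)), 0 => //=; rewrite vnorm0 ler01.
Qed.

Lemma laplacian_residual_le (R : realType) n (L : 'M[R]_n) (d : 'I_n -> R[i]) (f : R[i])
    (c M1 M2 : R) :
  laplacian L -> 0 < lambda2 L -> 0 <= c -> c <= cabs f ->
  (forall i, cabs (d i) <= M1) ->
  n%:R^-1 * \sum_i d i != 0 -> cabs (n%:R^-1 * \sum_i d i)^-1 <= M2 ->
  M1 + M1 ^+ 2 * M2 < c * lambda2 L ->
  forall x, (c * lambda2 L - (M1 + M1 ^+ 2 * M2))
    * vnorm ((invmx (diag_mx (\row_i d i) + f *: cplx_mx L)
              - (n%:R^-1 / (n%:R^-1 * \sum_i d i)) *: const_mx 1) *m x)
  <= (1 + M1 * M2) ^+ 2 * vnorm x.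
Proof.
move=> L_lap lam_gt0 c_ge0 c_le d_le m_neq0 invm_le kappa_gt.
have [L_sym [_ L_ones]] := L_lap.
apply: invmx_residual_le => //.
- by rewrite -scalemxAl cplx_mx_ones ?scaler0.
- by rewrite -scalemxAr ones_cplx_mx ?scaler0.
move=> y y0; rewrite -scalemxAl cvdotZr cabsM -mulrA.
apply: ler_pM => //; first exact: mulr_ge0 (ltW lam_gt0) (sqr_ge0 _).
exact: laplacian_coercive.
Qed.

Unset Implicit Arguments.

Theorem theorem6 (R : realType)
    (gn gd : nat -> {poly R[i]}) (fn fd : {poly R[i]})
    (L : forall n : nat, 'M[R]_n) (S : set R[i]) :
  (forall i, rat_proper (gn i) (gd i)) ->
  rat_proper fn fd ->
  (forall n, laplacian (L n)) ->
  L 1%N = 0 ->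
  (forall M : R, exists N : nat, forall n : nat, (N <= n)%N -> M <= lambda2 (L n)) ->
  ccompact S ->
  (exists M : R, 0 < M /\ forall i s, S s ->
      (gn i).[s] != 0 /\ cabs (rat_eval (gd i) (gn i) s) <= M) ->
  (exists M : R, 0 < M /\ forall n s, (0 < n)%N -> S s ->
      let m := (n%:R)^-1 * \sum_(i < n) rat_eval (gd i) (gn i) s in
      m != 0 /\ cabs m^-1 <= M) ->
  (exists c : R, 0 < c /\ forall s, S s -> c <= cabs (rat_eval fn fd s)) ->
  forall eps : R, 0 < eps -> exists N : nat, forall n : nat, (N <= n)%N ->
    forall s, S s ->
      let Ginv := diag_mx (\row_(i < n) rat_eval (gd i) (gn i) s) in
      let T := invmx (Ginv + rat_eval fn fd s *: cplx_mx (L n)) in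
      let gbar := ((n%:R)^-1 * \sum_(i < n) rat_eval (gd i) (gn i) s)^-1 in
      specnorm (T - ((n%:R)^-1 * gbar) *: const_mx 1) <= eps.
Proof.
move=> _ _ L_lap _ lam_to_oo _ [M1 [M1_gt0 g_le]] [M2 [M2_gt0 gbar_le]] [c [c_gt0 f_ge]].
move=> eps eps_gt0; set K1 := M1 + M1 ^+ 2 * M2; set K2 := (1 + M1 * M2) ^+ 2.
have K1_ge0 : 0 <= K1 by rewrite addr_ge0 ?mulr_ge0 ?exprn_ge0 ?ltW.
have K2_ge0 : 0 <= K2 := sqr_ge0 _.
have [N lam_ge] := lam_to_oo ((K2 / eps + K1) / c + 1).
exists (maxn N 1) => n n_ge s Ss /=.
have [m_neq0 invm_le] := gbar_le n s (leq_trans (leq_maxr N 1) n_ge) Ss.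
have kappa_gt : K2 / eps + K1 < c * lambda2 (L n).
  have := ler_wpM2l (ltW c_gt0) (lam_ge n (leq_trans (leq_maxl N 1) n_ge)).
  by rewrite mulrDr mulrCA mulfV ?gt_eqF // mulr1; lra.
have lam_gt0 : 0 < lambda2 (L n).
  rewrite -(pmulr_rgt0 _ c_gt0); apply: le_lt_trans kappa_gt.
  exact: addr_ge0 (divr_ge0 K2_ge0 (ltW eps_gt0)) K1_ge0.
apply: specnorm_le => x x_le1.
have := laplacian_residual_le (L_lap n) lam_gt0 (ltW c_gt0) (f_ge s Ss)
  (fun i => (g_le i s Ss).2) m_neq0 invm_le _ x.
set v := vnorm (_ *m x); rewrite -/K1 -/K2.
have K1_lt : K1 < c * lambda2 (L n).
  by apply: le_lt_trans kappa_gt; rewrite lerDr; exact: divr_ge0 K2_ge0 (ltW eps_gt0).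
move=> /(_ K1_lt) v_le; have := vnorm_ge0 (_ *m x); rewrite -/v => v_ge0.
have := ler_wpM2l K2_ge0 x_le1; have : K2 < (c * lambda2 (L n) - K1) * eps.
  by rewrite -ltr_pdivrMr //; lra.
nra.
Qed.
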